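(* Let $\mu$ be an exterior $3$-form in a $6$-dimensional real vector space $V$, let $\xi^1,\dots,\xi^6$ be a basis of $V^*$, and let $H'$ be the set of all $\xi\in V^*$ such that the $4$-form $\xi\wedge\mu$ is decomposable. (i) If $\mu=\xi^1\wedge\xi^2\wedge\xi^3+\xi^3\wedge\xi^4\wedge\xi^5+\xi^5\wedge\xi^6\wedge\xi^1$, then $H'$ equals the linear span of $\xi^1,\xi^3,\xi^5$. (ii) If $\mu=\xi^1\wedge\xi^2\wedge\xi^3+\xi^4\wedge\xi^5\wedge\xi^6$, then $H'$ is the set-theoretic union of the span of $\xi^1,\xi^2,\xi^3$ and the span of $\xi^4,\xi^5,\xi^6$.
   Context: A $p$-form is decomposable if it is an exterior product of $p$ $1$-forms (the zero form counts as decomposable). *)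

(* Exterior forms on a real vector space V are represented as
   alternating multilinear maps (V^k -> R); a k-form is a function ('I_k -> V) -> R. *)
From HB Require Import structures.
From mathcomp Require Import all_boot all_order all_algebra.
From mathcomp Require Import reals.
Set Implicit Arguments. Unset Strict Implicit. Unset Printing Implicit Defensive.
Import Order.TTheory GRing.Theory Num.Theory.
Local Open Scope ring_scope.

Section Forms.
Variables (R : realType) (V : vectType R).

Definition is_lin (f : V -> R) : Prop :=
  forall (a : R) (u w : V), f (a *: u + w) = a * f u + f w.

Definition wedge_n (k : nat) (eta : 'I_k -> V -> R) : ('I_k -> V) -> R :=
  fun v => \det (\matrix_(i < k, j < k) eta i (v j)).

Definition wedge_1_3 (xi : V -> R) (mu : ('I_3 -> V) -> R) : ('I_4 -> V) -> R :=
  fun v => \sum_(i < 4) (-1) ^+ i * xi (v i) * mu (fun j : 'I_3 => v (lift i j)).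

(* a 4-form is decomposable iff it is a wedge product of four 1-forms
   (the zero form is included, taking all eta_i = 0) *)
Definition decomposable4 (om : ('I_4 -> V) -> R) : Prop :=
  exists eta : 'I_4 -> V -> R,
    (forall i, is_lin (eta i)) /\ forall v, om v = wedge_n eta v.

Definition tri (f g h : V -> R) : 'I_3 -> V -> R :=
  fun k => match val k with 0 => f | 1 => g | _ => h end.

Definition wedge3 (f g h : V -> R) : ('I_3 -> V) -> R := wedge_n (tri f g h).

Definition add_form (k : nat) (a b : ('I_k -> V) -> R) : ('I_k -> V) -> R :=
  fun v => a v + b v.

(* xs is a basis of V^* (given dim V = 6, linear independence suffices) *)
Definition dual_basis6 (xs : 'I_6 -> V -> R) : Prop :=
  (forall i, is_lin (xs i)) /\
  forall c : 'I_6 -> R, (forall v, \sum_(i < 6) c i * xs i v = 0) -> forall i, c i = 0.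

Definition in_span3 (xi f g h : V -> R) : Prop :=
  exists a b c : R, forall v, xi v = a * f v + b * g v + c * h v.

End Forms.

(* xi^(i+1) in the paper is  xs (inord i)  here (0-based indexing) *)

(* If om is decomposable, so is the 2-form g X Y := om (X, Y, P, Q) for fixed P, Q; hence g
   satisfies the Pluecker relation g A B * g C D - g A C * g B D + g A D * g B C = 0.  Taking
   A, ..., Q in the basis of V dual to xi^1, ..., xi^6 turns these relations for om = xi /\ mu
   into quadratic equations on the coordinates of xi: in case (i) the squares of the coordinates
   along xi^2, xi^4, xi^6 vanish, in case (ii) each coordinate along xi^1, xi^2, xi^3 times each
   coordinate along xi^4, xi^5, xi^6 vanishes.  Conversely, on the claimed sets xi /\ mu factors:
   for xi = a xi^1 + b xi^3 + c xi^5 it is (a xi^4 + b xi^6 + c xi^2) /\ xi^1 /\ xi^3 /\ xi^5,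
   and for xi in the span of xi^1, xi^2, xi^3 it is xi /\ xi^4 /\ xi^5 /\ xi^6. *)

From HB Require Import structures.
From mathcomp Require Import all_boot all_order all_algebra.
From mathcomp Require Import reals ring lra.
From Stdlib Require Import FunctionalExtensionality.
Set Implicit Arguments. Unset Strict Implicit. Unset Printing Implicit Defensive.
Import Order.TTheory GRing.Theory Num.Theory.
Local Open Scope ring_scope.

Section SmallDeterminants.
Variable R : comNzRingType.

(* Entries are functions of [nat] indices so that cofactor expansion along
   column 0 reduces, by simplification of [bump], to explicit polynomials. *)
Definition minor_entries (F : nat -> nat -> R) (i0 j0 : nat) (i j : nat) : R :=
  F (bump i0 i) (bump j0 j).

Lemma row'_col'_mx n (F : nat -> nat -> R) (i0 j0 : 'I_n.+1) :
  row' i0 (col' j0 (\matrix_(i < n.+1, j < n.+1) F i j)) =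
  \matrix_(i < n, j < n) minor_entries F i0 j0 i j.
Proof. by apply/matrixP => i j; rewrite !mxE. Qed.

Lemma det_mx2 (F : nat -> nat -> R) :
  \det (\matrix_(i < 2, j < 2) F i j) = F 0 0 * F 1 1 - F 1 0 * F 0 1.
Proof.
rewrite (expand_det_col _ ord0) !big_ord_recl big_ord0 /cofactor !row'_col'_mx.
by rewrite !det_mx11 !mxE /minor_entries /= /bump /=; ring.
Qed.

Lemma det_mx3 (F : nat -> nat -> R) :
  \det (\matrix_(i < 3, j < 3) F i j) =
  F 0 0 * (F 1 1 * F 2 2 - F 2 1 * F 1 2)
  - F 1 0 * (F 0 1 * F 2 2 - F 2 1 * F 0 2)
  + F 2 0 * (F 0 1 * F 1 2 - F 1 1 * F 0 2).
Proof.
rewrite (expand_det_col _ ord0) !big_ord_recl big_ord0 /cofactor !row'_col'_mx.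
by rewrite !det_mx2 !mxE /minor_entries /= /bump /=; ring.
Qed.

Lemma det_mx4 (F : nat -> nat -> R) :
  \det (\matrix_(i < 4, j < 4) F i j) =
  F 0 0 * (F 1 1 * (F 2 2 * F 3 3 - F 3 2 * F 2 3)
  - F 2 1 * (F 1 2 * F 3 3 - F 3 2 * F 1 3)
  + F 3 1 * (F 1 2 * F 2 3 - F 2 2 * F 1 3))
  - F 1 0 * (F 0 1 * (F 2 2 * F 3 3 - F 3 2 * F 2 3)
  - F 2 1 * (F 0 2 * F 3 3 - F 3 2 * F 0 3)
  + F 3 1 * (F 0 2 * F 2 3 - F 2 2 * F 0 3))
  + F 2 0 * (F 0 1 * (F 1 2 * F 3 3 - F 3 2 * F 1 3)
  - F 1 1 * (F 0 2 * F 3 3 - F 3 2 * F 0 3)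
  + F 3 1 * (F 0 2 * F 1 3 - F 1 2 * F 0 3))
  - F 3 0 * (F 0 1 * (F 1 2 * F 2 3 - F 2 2 * F 1 3)
  - F 1 1 * (F 0 2 * F 2 3 - F 2 2 * F 0 3)
  + F 2 1 * (F 0 2 * F 1 3 - F 1 2 * F 0 3)).
Proof.
rewrite (expand_det_col _ ord0) !big_ord_recl big_ord0 /cofactor !row'_col'_mx.
by rewrite !det_mx3 !mxE /minor_entries /= /bump /=; ring.
Qed.

End SmallDeterminants.

Section FormsOnVectors.
Variables (R : realType) (V : vectType R).

Definition vec3n (a b c : V) (n : nat) : V :=
  match n with 0 => a | 1 => b | _ => c end.
Definition vec3 (a b c : V) (i : 'I_3) : V := vec3n a b c i.

Definition vec4n (a b c d : V) (n : nat) : V :=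
  match n with 0 => a | 1 => b | 2 => c | _ => d end.
Definition vec4 (a b c d : V) (i : 'I_4) : V := vec4n a b c d i.

Definition quad (f0 f1 f2 f3 : V -> R) (i : 'I_4) : V -> R :=
  match val i with 0 => f0 | 1 => f1 | 2 => f2 | _ => f3 end.

Lemma vec4_eta (v : 'I_4 -> V) :
  v = vec4 (v (inord 0)) (v (inord 1)) (v (inord 2)) (v (inord 3)).
Proof.
by apply: functional_extensionality => -[[|[|[|[|//]]]] ?];
  congr v; apply/val_inj; rewrite /= inordK.
Qed.

Definition form_entry n (eta : 'I_n.+1 -> V -> R) (v : nat -> V) (i j : nat) : R :=
  eta (inord i) (v j).

Lemma wedge_n_vec4 (eta : 'I_4 -> V -> R) a b c d :
  wedge_n eta (vec4 a b c d) =
  \det (\matrix_(i < 4, j < 4) form_entry eta (vec4n a b c d) i j).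
Proof. by congr (\det _); apply/matrixP => i j; rewrite !mxE /form_entry inord_val. Qed.

Lemma wedge3_vec3 (f g h : V -> R) a b c :
  wedge3 f g h (vec3 a b c) =
  f a * (g b * h c - g c * h b) - g a * (f b * h c - f c * h b)
  + h a * (f b * g c - f c * g b).
Proof.
rewrite /wedge3 /wedge_n (_ : \matrix_(i, j) _ =
  \matrix_(i < 3, j < 3) form_entry (tri f g h) (vec3n a b c) i j).
  by rewrite det_mx3 /form_entry /tri /= !inordK //=; ring.
by apply/matrixP => i j; rewrite !mxE /form_entry inord_val.
Qed.

Lemma wedge_1_3_vec4 (xi : V -> R) mu a b c d :
  wedge_1_3 xi mu (vec4 a b c d) =
  xi a * mu (vec3 b c d) - xi b * mu (vec3 a c d) + xi c * mu (vec3 a b d)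
  - xi d * mu (vec3 a b c).
Proof.
rewrite /wedge_1_3 !big_ord_recl big_ord0 /=.
have mu_lift (i0 : 'I_4) a' b' c' :
    (forall j, vec4 a b c d (lift i0 j) = vec3 a' b' c' j) ->
    mu (fun j => vec4 a b c d (lift i0 j)) = mu (vec3 a' b' c').
  by move=> eq_v; congr mu; apply: functional_extensionality.
rewrite (mu_lift ord0 b c d) ?(mu_lift (lift ord0 ord0) a c d)
  ?(mu_lift (lift ord0 (lift ord0 ord0)) a b d)
  ?(mu_lift (lift ord0 (lift ord0 (lift ord0 ord0))) a b c);
  try by case=> [[|[|[|?]]] ?].
by rewrite /vec4 /=; ring.
Qed.

Lemma decomposable4_plucker (om : ('I_4 -> V) -> R) :
  decomposable4 om -> forall A B C D P Q,
  let g X Y := om (vec4 X Y P Q) in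
  g A B * g C D - g A C * g B D + g A D * g B C = 0.
Proof.
case=> eta [_ omE] A B C D P Q /=.
by rewrite !omE !wedge_n_vec4 !det_mx4 /form_entry /=; ring.
Qed.

Lemma decomposable4_quad (om : ('I_4 -> V) -> R) f0 f1 f2 f3 :
  is_lin f0 -> is_lin f1 -> is_lin f2 -> is_lin f3 ->
  (forall a b c d, om (vec4 a b c d) = wedge_n (quad f0 f1 f2 f3) (vec4 a b c d)) ->
  decomposable4 om.
Proof.
move=> f0_lin f1_lin f2_lin f3_lin omE; exists (quad f0 f1 f2 f3); split.
  by case=> [[|[|[|[|//]]]] ?].
by move=> v; rewrite (vec4_eta v) omE.
Qed.

End FormsOnVectors.

Section LinearFunctionals.
Variables (R : realType) (V : vectType R).

Lemma is_lin_comb3 (f g h : V -> R) a b c :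
  is_lin f -> is_lin g -> is_lin h -> is_lin (fun v => a * f v + b * g v + c * h v).
Proof. by move=> f_lin g_lin h_lin s u w; rewrite f_lin g_lin h_lin; ring. Qed.

Variables (f : V -> R) (f_lin : is_lin f).

Lemma lin0 : f 0 = 0.
Proof. by have := f_lin 1 0 0; rewrite scale1r addr0 mul1r; lra. Qed.

Lemma linD u w : f (u + w) = f u + f w.
Proof. by have := f_lin 1 u w; rewrite scale1r mul1r. Qed.

Lemma linZ a u : f (a *: u) = a * f u.
Proof. by have := f_lin a u 0; rewrite !addr0 lin0 addr0. Qed.

Lemma lin_sum n (F : 'I_n -> V) : f (\sum_(i < n) F i) = \sum_(i < n) f (F i).
Proof. exact: (big_morph f linD lin0). Qed.

Lemma lin_vbasis v :
  f v = \sum_(k < \dim (fullv : {vspace V}))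
          coord (vbasis fullv) k v * f (vbasis fullv)`_k.
Proof.
rewrite {1}(coord_vbasis (memvf v)) lin_sum.
by apply: eq_bigr => k _; rewrite linZ.
Qed.

End LinearFunctionals.

Lemma sum_mulr_delta (R : comNzRingType) n (k : 'I_n -> R) i :
  \sum_(j < n) k j * (i == j)%:R = k i.
Proof.
rewrite (bigD1 i) //= eqxx mulr1 big1 ?addr0 // => j /negPf.
by rewrite eq_sym => ->; rewrite mulr0.
Qed.

Section DualBasis.
Variables (R : realType) (V : vectType R) (n : nat) (xs : 'I_n -> V -> R).
Hypothesis xs_lin : forall i, is_lin (xs i).

Lemma exists_dual_vectors :
  (forall c : 'I_n -> R, (forall v, \sum_(i < n) c i * xs i v = 0) -> forall i, c i = 0) ->
  exists e : 'I_n -> V, forall i j, xs i (e j) = (i == j)%:R.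
Proof.
move=> xs_free; set b := vbasis (fullv : {vspace V}).
pose M : 'M[R]_(n, \dim (fullv : {vspace V})) := \matrix_(i, k) xs i b`_k.
have /row_freeP [B MB] : row_free M.
  apply: inj_row_free => u uM0; apply/rowP => i; rewrite mxE.
  apply: xs_free i => v.
  under eq_bigr do rewrite (lin_vbasis (xs_lin _)) big_distrr.
  rewrite exchange_big big1 //= => k _.
  have /rowP/(_ k) := uM0; rewrite !mxE => uMk.
  rewrite (eq_bigr (fun i => coord b k v * (u 0 i * M i k))); last first.
    by move=> i _; rewrite /M mxE mulrCA.
  by rewrite -big_distrr /= uMk mulr0.
exists (fun j => \sum_k B k j *: b`_k) => i j.
have /matrixP/(_ i j) := MB; rewrite !mxE => <-.
rewrite (lin_sum (xs_lin i)); apply: eq_bigr => k _.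
by rewrite (linZ (xs_lin i)) /M mxE mulrC.
Qed.

Lemma dual_vectors_expansion (e : 'I_n -> V) :
  \dim (fullv : {vspace V}) = n -> (forall i j, xs i (e j) = (i == j)%:R) ->
  forall f, is_lin f -> forall v, f v = \sum_(j < n) xs j v * f (e j).
Proof.
move=> dimV xs_e f f_lin v.
pose es := [tuple e j | j < n].
have es_nth (j : 'I_n) : es`_j = e j by rewrite nth_mktuple.
have es_free : free es.
  apply/freeP => k k_e0 i; have := congr1 (xs i) k_e0.
  rewrite (lin0 (xs_lin i)) (lin_sum (xs_lin i)).
  under eq_bigr do rewrite es_nth (linZ (xs_lin i)) xs_e.
  by rewrite sum_mulr_delta.
have es_basis : basis_of fullv es.
  by rewrite basisEfree es_free subvf size_tuple dimV leqnn.
have v_es := coord_basis es_basis (memvf v).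
have coord_es j : coord es j v = xs j v.
  rewrite {2}v_es (lin_sum (xs_lin j)).
  under eq_bigr do rewrite es_nth (linZ (xs_lin j)) xs_e.
  by rewrite sum_mulr_delta.
rewrite {1}v_es (lin_sum f_lin); apply: eq_bigr => j _.
by rewrite es_nth (linZ f_lin) coord_es.
Qed.

End DualBasis.

Lemma mul_table_eq0 (R : idomainType) m n (p q : nat -> R) :
  (forall i j, (i < m)%N -> (j < n)%N -> p i * q j = 0) ->
  (forall i, (i < m)%N -> p i = 0) \/ (forall j, (j < n)%N -> q j = 0).
Proof.
move=> pq0.
have [/existsP [i pi_neq0] | /existsPn p0] := boolP [exists i : 'I_m, p i != 0].
  right => j lt_jn; apply/eqP; have /eqP := pq0 i j (ltn_ord i) lt_jn.
  by rewrite mulf_eq0 (negPf pi_neq0).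
by left => i lt_im; apply/eqP; have := p0 (Ordinal lt_im); rewrite negbK.
Qed.

Section SixDimensional.
Variables (R : realType) (V : vectType R) (xs : 'I_6 -> V -> R) (e : 'I_6 -> V).
Hypothesis xs_lin : forall i, is_lin (xs i).
Hypothesis xs_e : forall i j, xs i (e j) = (i == j)%:R.
Hypothesis xs_expand : forall f, is_lin f -> forall v, f v = \sum_(j < 6) xs j v * f (e j).

Local Notation x k := (xs (@inord 5 k)).
Local Notation E k := (e (@inord 5 k)).

Lemma x_E k l : (k < 6)%N -> (l < 6)%N -> x k (E l) = (k == l)%:R.
Proof. by move=> lt_k lt_l; rewrite xs_e -(inj_eq val_inj) /= !inordK. Qed.

Lemma lin_dual_expand f : is_lin f -> forall v, f v =
  x 0 v * f (E 0) + x 1 v * f (E 1) + x 2 v * f (E 2) + x 3 v * f (E 3)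
  + x 4 v * f (E 4) + x 5 v * f (E 5).
Proof.
move=> f_lin v; rewrite (xs_expand f_lin v).
rewrite (eq_bigr (fun j : 'I_6 => x j v * f (E j))); last by move=> j _; rewrite inord_val.
rewrite -(big_mkord xpredT (fun j => x j v * f (E j))) /index_iota /=.
by rewrite !big_cons big_nil addr0 !addrA.
Qed.

(* Closes [t = 0] when the Pluecker relation of [om_dec] at [A B C D P Q] reads [t = 0] or
   [- t = 0] once expanded in coordinates. *)
Ltac plucker_rel om_dec A B C D P Q :=
  have := decomposable4_plucker om_dec A B C D P Q;
  rewrite /= !wedge_1_3_vec4 /add_form !wedge3_vec3 !x_E //=;
  first [move=> <-; ring | move=> /eqP; rewrite -oppr_eq0 => /eqP <-; ring].

Local Notation mu_cyclic := (add_form (add_form (wedge3 (x 0) (x 1) (x 2))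
  (wedge3 (x 2) (x 3) (x 4))) (wedge3 (x 4) (x 5) (x 0))).
Local Notation mu_split := (add_form (wedge3 (x 0) (x 1) (x 2)) (wedge3 (x 3) (x 4) (x 5))).

Lemma decomposable_cyclicP xi : is_lin xi ->
  decomposable4 (wedge_1_3 xi mu_cyclic) <-> in_span3 xi (x 0) (x 2) (x 4).
Proof.
move=> xi_lin; split=> [om_dec | [a [b [c xiE]]]].
- have xi1 : xi (E 1) = 0.
    apply/eqP; rewrite -sqrf_eq0; apply/eqP.
    by plucker_rel om_dec (E 0) (E 2) (E 3) (E 5) (E 1) (E 4).
  have xi3 : xi (E 3) = 0.
    apply/eqP; rewrite -sqrf_eq0; apply/eqP.
    by plucker_rel om_dec (E 1) (E 2) (E 4) (E 5) (E 0) (E 3).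
  have xi5 : xi (E 5) = 0.
    apply/eqP; rewrite -sqrf_eq0; apply/eqP.
    by plucker_rel om_dec (E 0) (E 1) (E 3) (E 4) (E 2) (E 5).
  exists (xi (E 0)), (xi (E 2)), (xi (E 4)) => v.
  by rewrite (lin_dual_expand xi_lin v) xi1 xi3 xi5; ring.
- apply: (decomposable4_quad (f0 := fun v => a * x 3 v + b * x 5 v + c * x 1 v)
    (f1 := x 0) (f2 := x 2) (f3 := x 4)) => //; first exact: is_lin_comb3.
  move=> a' b' c' d'; rewrite wedge_1_3_vec4 wedge_n_vec4 det_mx4 /form_entry /quad /=.
  by rewrite !inordK //= /add_form !wedge3_vec3 !xiE; ring.
Qed.

Lemma decomposable_splitP xi : is_lin xi ->
  decomposable4 (wedge_1_3 xi mu_split) <->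
  in_span3 xi (x 0) (x 1) (x 2) \/ in_span3 xi (x 3) (x 4) (x 5).
Proof.
move=> xi_lin; split=> [om_dec | [] [a [b [c xiE]]]].
- have cross i j : (i < 3)%N -> (j < 3)%N -> xi (E i) * xi (E j.+3) = 0.
    case: i j => [|[|[|//]]] [|[|[|//]]] _ _.
    * by plucker_rel om_dec (E 1) (E 2) (E 4) (E 5) (E 0) (E 3).
    * by plucker_rel om_dec (E 1) (E 2) (E 3) (E 5) (E 0) (E 4).
    * by plucker_rel om_dec (E 1) (E 2) (E 3) (E 4) (E 0) (E 5).
    * by plucker_rel om_dec (E 0) (E 2) (E 4) (E 5) (E 1) (E 3).
    * by plucker_rel om_dec (E 0) (E 2) (E 3) (E 5) (E 1) (E 4).
    * by plucker_rel om_dec (E 0) (E 2) (E 3) (E 4) (E 1) (E 5).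
    * by plucker_rel om_dec (E 0) (E 1) (E 4) (E 5) (E 2) (E 3).
    * by plucker_rel om_dec (E 0) (E 1) (E 3) (E 5) (E 2) (E 4).
    * by plucker_rel om_dec (E 0) (E 1) (E 3) (E 4) (E 2) (E 5).
  case: (mul_table_eq0 cross) => xi0; [right | left].
  + exists (xi (E 3)), (xi (E 4)), (xi (E 5)) => v.
    by rewrite (lin_dual_expand xi_lin v) (xi0 0) // (xi0 1) // (xi0 2) //; ring.
  + exists (xi (E 0)), (xi (E 1)), (xi (E 2)) => v.
    by rewrite (lin_dual_expand xi_lin v) (xi0 0) // (xi0 1) // (xi0 2) //; ring.
- apply: (decomposable4_quad (f0 := xi) (f1 := x 3) (f2 := x 4) (f3 := x 5)) => //.
  move=> a' b' c' d'; rewrite wedge_1_3_vec4 wedge_n_vec4 det_mx4 /form_entry /quad /=.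
  by rewrite !inordK //= /add_form !wedge3_vec3 !xiE; ring.
- apply: (decomposable4_quad (f0 := xi) (f1 := x 0) (f2 := x 1) (f3 := x 2)) => //.
  move=> a' b' c' d'; rewrite wedge_1_3_vec4 wedge_n_vec4 det_mx4 /form_entry /quad /=.
  by rewrite !inordK //= /add_form !wedge3_vec3 !xiE; ring.
Qed.

End SixDimensional.

Theorem lemma4p3 (R : realType) (V : vectType R) (hdim : \dim (fullv : {vspace V}) = 6%N)
  (xs : 'I_6 -> V -> R) (hxs : dual_basis6 xs) :
  let x := fun i : nat => xs (@inord 5 i) in
  (* (i) mu = x1^x2^x3 + x3^x4^x5 + x5^x6^x1 *)
  (forall xi : V -> R, is_lin xi ->
     (decomposable4 (wedge_1_3 xi
        (add_form (add_form (wedge3 (x 0%N) (x 1%N) (x 2%N)) (wedge3 (x 2%N) (x 3%N) (x 4%N)))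
                  (wedge3 (x 4%N) (x 5%N) (x 0%N))))
      <-> in_span3 xi (x 0%N) (x 2%N) (x 4%N))) /\
  (* (ii) mu = x1^x2^x3 + x4^x5^x6 *)
  (forall xi : V -> R, is_lin xi ->
     (decomposable4 (wedge_1_3 xi
        (add_form (wedge3 (x 0%N) (x 1%N) (x 2%N)) (wedge3 (x 3%N) (x 4%N) (x 5%N))))
      <-> (in_span3 xi (x 0%N) (x 1%N) (x 2%N) \/ in_span3 xi (x 3%N) (x 4%N) (x 5%N)))).
Proof.
move=> x; case: hxs => xs_lin xs_free.
have [e xs_e] := exists_dual_vectors xs_lin xs_free.
have xs_expand := dual_vectors_expansion xs_lin hdim xs_e.
split=> xi xi_lin.
  exact: (decomposable_cyclicP xs_lin xs_e xs_expand xi_lin).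
exact: (decomposable_splitP xs_lin xs_e xs_expand xi_lin).
Qed.
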